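(* Let $g$ be a good probability density. Let $\mathbf Z=(Z_1,Z_2,\ldots)$ be i.i.d. with density $g$. Let $\mathbf X=(X_1,X_2,\ldots)$ be independent of $\mathbf Z$ with distribution absolutely continuous with respect to that of $\mathbf Z$. Let $\mathcal I=\{I_1,\ldots,I_d\}\subseteq\mathbb N$ be an a.s. finite (possibly empty) set of distinct indices chosen as a measurable function of $\mathbf X$, let $X^*=\max\{X_{I_1},\ldots,X_{I_d}\}$, and define $$Y_k=\begin{cases}2X^*+Z_j&\text{if }k=I_j\text{ for some }1\le j\le d,\\ X_k&\text{if }k\notin\mathcal I.\end{cases}$$ Then the distribution of $\mathbf Y=(Y_k)_{k\in\mathbb N}$ is absolutely continuous with respect to that of $\mathbf Z$.
   Context: A probability density $g$ is good if its support is $\mathbb{R}_+=[0,\infty)$ and for every $K>0$ there is a constant $C(K)$ with $\sup_{u\in(0,\infty),\,x\in(0,K]}g(u-x)/g(u)\le C(K)$ (with $g=0$ on $(-\infty,0)$). Example: the Exponential density. *)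

From HB Require Import structures.
From mathcomp Require Import all_boot all_order all_algebra.
From mathcomp Require Import all_classical all_reals all_analysis.
Set Implicit Arguments. Unset Strict Implicit. Unset Printing Implicit Defensive.
Import Order.TTheory GRing.Theory Num.Theory.
Local Open Scope classical_set_scope.
Local Open Scope ring_scope.

Definition seq_measurable (R : realType) : set (set (nat -> R)) :=
  <<s \bigcup_(n in [set: nat])
        [set (fun x : nat -> R => x n) @^-1` B | B in [set B : set R | measurable B]] >>.

Definition good_density (R : realType) (g : R -> R) : Prop :=
  [/\ measurable_fun [set: R] g,
      (forall x, 0 <= g x),
      (\int[lebesgue_measure]_(x in [set: R]) (g x)%:E = 1)%E &
  [/\
      (forall x, x < 0 -> g x = 0),
      (forall x, 0 < x -> 0 < g x) &
      (forall K, 0 < K -> exists C : R, forall u x, 0 < u -> 0 < x -> x <= K ->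
          g (u - x) / g u <= C)]].

Definition iid_with_density (R : realType) (d : measure_display)
    (Omega : measurableType d) (P : probability Omega R)
    (g : R -> R) (Z : nat -> Omega -> R) : Prop :=
  [/\ (forall n, measurable_fun [set: Omega] (Z n)),
      (forall n (B : set R), measurable B ->
          P (Z n @^-1` B) = (\int[lebesgue_measure]_(x in B) (g x)%:E)%E) &
      (forall (S : seq nat) (B : nat -> set R), uniq S ->
          (forall n, measurable (B n)) ->
          P (\bigcap_(n in [set n | n \in S]) (Z n @^-1` B n)) =
          (\prod_(n <- S) P (Z n @^-1` B n))%E)].

Definition vec (R : realType) (Omega : Type) (Z : nat -> Omega -> R) :
  Omega -> nat -> R := fun w n => Z n w.

Definition indep_seq (R : realType) (d : measure_display)
    (Omega : measurableType d) (P : probability Omega R)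
    (X Z : Omega -> nat -> R) : Prop :=
  forall A B : set (nat -> R), seq_measurable A -> seq_measurable B ->
    P (X @^-1` A `&` Z @^-1` B) = (P (X @^-1` A) * P (Z @^-1` B))%E.

Definition law_abs_cont (R : realType) (d : measure_display)
    (Omega : measurableType d) (P : probability Omega R)
    (X Z : Omega -> nat -> R) : Prop :=
  forall A : set (nat -> R), seq_measurable A ->
    P (Z @^-1` A) = 0%E -> P (X @^-1` A) = 0%E.

Definition index_selector (R : realType) (I : (nat -> R) -> seq nat) : Prop :=
  (forall x, uniq (I x)) /\
  (forall s : seq nat, seq_measurable [set x | I x = s]).

(* X^* = max {X_{I_1},...,X_{I_d}} (irrelevant when d = 0). *)
Definition Xstar (R : realType) (s : seq nat) (x : nat -> R) : R :=
  \big[Num.max/x (head 0%N s)]_(i <- s) x i.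

(* Y_k = 2 X^* + Z_j if k = I_j, and Y_k = X_k if k \notin I.
   (0-based: I_j is the j-th element of the list, Z_j is z j.) *)
Definition Ymap (R : realType) (s : seq nat) (x z : nat -> R) : nat -> R :=
  fun k => if k \in s then 2 * Xstar s x + z (index k s) else x k.

(* Write x, z for the values of X, Z.  On the event {I(x) = s, x >= 0,
   X^*(x) <= K} one has Y = splice_s(x, z'), where splice_s puts z'_j at
   position s_j and keeps x elsewhere, and z' is z with its first |s|
   coordinates translated by 2 X^*(x) in [0, 2K].  Because Z is i.i.d.,
   splice_s maps mu_Z (x) mu_Z to mu_Z; because g is good, translating finitely
   many coordinates by bounded amounts inflates mu_Z by at most a constant
   factor.  So for a mu_Z-null set A, Fubini makes the z-section of
   {splice_s in A} mu_Z-null for mu_Z-almost every x, hence for mu_X-almost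
   every x since mu_X << mu_Z, and then the z-section of {Y in A} is null as
   well.  Countably many events (s, K) cover {Y in A}, up to the null event
   that some X_k is negative. *)

From HB Require Import structures.
From mathcomp Require Import all_boot all_order all_algebra.
From mathcomp Require Import all_classical all_reals all_analysis.
From mathcomp Require Import measurable_realfun.
Set Implicit Arguments. Unset Strict Implicit. Unset Printing Implicit Defensive.
Import Order.TTheory GRing.Theory Num.Theory.
Local Open Scope classical_set_scope.
Local Open Scope ring_scope.

Lemma measurableT_preimage d d' (T : measurableType d) (T' : measurableType d')
    (f : T -> T') (B : set T') :
  measurable_fun [set: T] f -> measurable B -> measurable (f @^-1` B).
Proof. by move=> mf mB; rewrite -[X in measurable X]setTI; exact: mf. Qed.

Lemma negligible_bigcup_countType d (T : sigmaRingType d) (R : realFieldType)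
    (mu : {measure set T -> \bar R}) (U : countType) (F : U -> set T) :
  (forall i, mu.-negligible (F i)) -> mu.-negligible (\bigcup_i F i).
Proof.
move=> nF.
have nG : mu.-negligible (\bigcup_n oapp F set0 (unpickle n)).
  apply: negligible_bigcup => n; case: (unpickle n) => [i|] /=; first exact: nF.
  exact: negligible_set0.
apply: (negligibleS _ nG) => t [i _ Fit].
by exists (pickle i) => //=; rewrite pickleK.
Qed.

Lemma null_dominates_integral0 d (T : measurableType d) (R : realType)
    (mu nu : {measure set T -> \bar R}) (h : T -> \bar R) :
  mu `<< nu -> measurable_fun [set: T] h -> (forall x, 0 <= h x)%E ->
  (\int[nu]_x h x = 0 -> \int[mu]_x h x = 0)%E.
Proof.
move=> mu_nu mh h0 nuh0.
have h_ae0 : ae_eq nu [set: T] h (cst 0%E).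
  apply/ae_eq_integral_abs => //.
  by rewrite -nuh0; apply: eq_integral => x _; rewrite gee0_abs.
rewrite (ae_eq_integral (cst 0%E)) ?integral0 //.
exact: null_dominates_ae_eq h_ae0.
Qed.

Section lebesgue_measure_shift.
Context {R : realType}.
Local Open Scope ereal_scope.

Lemma measurable_shift (c : R) : measurable_fun [set: R] (shift c).
Proof. by apply: measurable_funD => //; exact: measurable_id. Qed.

Lemma lebesgue_measure_shift (c : R) (D : set R) : measurable D ->
  lebesgue_measure (shift c @^-1` D) = lebesgue_measure D.
Proof.
move=> mD; rewrite -[LHS]/(pushforward lebesgue_measure (shift c : R -> measurableTypeR R) D).
apply/esym/lebesgue_measure_unique => //=; first exact: measurable_shift.
move=> _ _ [[a b] _ <-]; rewrite /pushforward.
have -> : shift c @^-1` `]a, b]%classic = `](a - c)%R, (b - c)%R]%classic.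
  by apply/seteqP; split => t /=; rewrite !in_itv /= ?ltrBlDr ?lerBrDr.
rewrite !lebesgue_measure_itv /= !lte_fin ltrD2r.
by case: ifP => // _; rewrite -!EFinD opprB addrA subrK.
Qed.

Lemma ge0_integral_shift (c : R) (D : set R) (f : R -> \bar R) :
  measurable D -> measurable_fun [set: R] f -> (forall x, 0 <= f x) ->
  \int[lebesgue_measure]_(t in shift c @^-1` D) f (t + c)%R =
  \int[lebesgue_measure]_(u in D) f u.
Proof.
move=> mD mf f0.
have mfD : measurable_fun D f := measurable_funS measurableT (subsetT D) mf.
have f0D : {in D, forall u, 0 <= f u} by move=> u _; exact: f0.
rewrite -[LHS]/(\int[lebesgue_measure]_(t in shift c @^-1` D) (f \o shift c) t).
have mshift : measurable_fun [set: measurableTypeR R]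
    (shift c : measurableTypeR R -> measurableTypeR R) := measurable_shift c.
rewrite -(ge0_integral_pushforward mshift lebesgue_measure mD mfD f0D).
by apply: eq_measure_integral => /= A mA _; exact: lebesgue_measure_shift.
Qed.

End lebesgue_measure_shift.

Section good_density.
Context {R : realType} (g : R -> R).
Hypothesis gg : good_density g.

Lemma good_density_shift_le (K : R) : 0 < K ->
  exists2 C : R, 0 <= C & forall c u, 0 <= c <= K -> g (u - c) <= C * g u.
Proof.
case: gg => _ g0 _ [gneg gpos ratio] K0.
have [C HC] := ratio K K0.
have C1 : 1 <= Num.max C 1 by rewrite le_max lexx orbT.
exists (Num.max C 1) => [|c u /andP[c0 cK]]; first exact: le_trans C1.
have [->|c_neq0] := eqVneq c 0; first by rewrite subr0 -[leLHS]mul1r ler_wpM2r.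
have cpos : 0 < c by rewrite lt_def c_neq0 c0.
have [upos|uneg] := ltP 0 u.
  have := HC u c upos cpos cK; rewrite ler_pdivrMr ?gpos // => /le_trans; apply.
  by rewrite ler_wpM2r // le_max lexx.
by rewrite gneg ?mulr_ge0 ?(le_trans ler01 C1) // subr_lt0 (le_lt_trans uneg).
Qed.

Lemma good_density_integral_shift_le (K : R) : 0 < K ->
  exists2 C : R, 0 <= C & forall c D, 0 <= c <= K -> measurable D ->
    (\int[lebesgue_measure]_(x in shift c @^-1` D) (g x)%:E <=
     C%:E * \int[lebesgue_measure]_(x in D) (g x)%:E)%E.
Proof.
move=> K0; have [C C0 HC] := good_density_shift_le K0.
case: gg => mg g0 _ _.
exists C => // c D cK mD.
have mgc : measurable_fun [set: R] (fun u => (g (u - c))%:E).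
  apply/measurable_EFinP; apply: measurableT_comp => //.
  exact: measurable_shift.
have -> : (\int[lebesgue_measure]_(x in shift c @^-1` D) (g x)%:E =
           \int[lebesgue_measure]_(x in D) (g (x - c))%:E)%E.
  rewrite -(ge0_integral_shift c mD mgc) => [|x]; last by rewrite lee_fin g0.
  by apply: eq_integral => t _; rewrite addrK.
rewrite -ge0_integralZl_EFin //; last 2 first.
- by move=> x _; rewrite lee_fin g0.
- by apply/measurable_EFinP; exact: measurable_funS mg.
apply: ge0_le_integral => //.
- by move=> x _; rewrite lee_fin g0.
- exact: measurable_funS mgc.
- by apply/measurable_EFinP/measurable_funM => //; exact: measurable_funS mg.
by move=> x _; rewrite lee_fin HC.
Qed.

End good_density.

Definition seqR (R : realType) := nat -> R.
HB.instance Definition _ (R : realType) := gen_eqMixin (seqR R).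
HB.instance Definition _ (R : realType) := gen_choiceMixin (seqR R).
HB.instance Definition _ (R : realType) := isPointed.Build (seqR R) (fun=> 0).

Definition coord_preimages (R : realType) : set (set (seqR R)) :=
  \bigcup_(n in [set: nat])
    [set (fun x : nat -> R => x n) @^-1` B | B in [set B : set R | measurable B]].

(* Its measurable sets are, by definition, those of [seq_measurable]. *)
Notation seqRType R := (g_sigma_algebraType (@coord_preimages R)).

Section sequence_space.
Context {R : realType}.
Implicit Types (F s : seq nat) (B : nat -> set R) (x z : seqRType R).

Lemma measurable_coord n : measurable_fun [set: seqRType R] (fun x => x n).
Proof.
move=> _ B mB; rewrite setTI; apply: sub_sigma_algebra.
by exists n => //; exists B.
Qed.

Lemma measurable_fun_seqR d (T : measurableType d) (f : T -> seqRType R) :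
  (forall n, measurable_fun [set: T] (fun t => f t n)) ->
  measurable_fun [set: T] f.
Proof.
move=> mf; apply: (@measurability _ _ T (seqRType R) setT f (@coord_preimages R)) => //.
by move=> _ [_ [n _ [B mB <-]] <-]; exact: mf.
Qed.

Definition cylinder F B : set (seqRType R) :=
  [set x | forall n, n \in F -> B n (x n)].

Definition cylinders : set (set (seqRType R)) :=
  [set A | exists F B, [/\ uniq F, forall n, measurable (B n) & A = cylinder F B]].

Lemma cylinder_nil B : cylinder [::] B = setT.
Proof. by apply/seteqP; split => x // _ n. Qed.

Lemma cylinder_cons a F B :
  cylinder (a :: F) B = (fun x => x a) @^-1` B a `&` cylinder F B.
Proof.
apply/seteqP; split => x /=.
  by move=> H; split => [|n nF]; apply: H; rewrite inE ?eqxx ?nF ?orbT.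
by move=> [Ba BF] n; rewrite inE => /orP[/eqP->|/BF].
Qed.

Lemma measurable_cylinder F B :
  (forall n, measurable (B n)) -> measurable (cylinder F B).
Proof.
move=> mB; elim: F => [|a F IH]; first by rewrite cylinder_nil.
rewrite cylinder_cons; apply: measurableI => //.
exact: measurableT_preimage (measurable_coord a) (mB a).
Qed.

Lemma cylinders_setI_closed : setI_closed cylinders.
Proof.
move=> _ _ [F1 [B1 [_ mB1 ->]]] [F2 [B2 [_ mB2 ->]]].
pose restr F B n := if n \in F then B n else setT.
exists (undup (F1 ++ F2)), (fun n => restr F1 B1 n `&` restr F2 B2 n); split.
- exact: undup_uniq.
- by move=> n; apply: measurableI; rewrite /restr; case: ifP.
apply/seteqP; split => x /=.
  move=> [x1 x2] n _; rewrite /restr.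
  by split; case: ifPn => // nF; [exact: x1 | exact: x2].
move=> H; split => n nF.
  have /H[] : n \in undup (F1 ++ F2) by rewrite mem_undup mem_cat nF.
  by rewrite /restr nF.
have /H[] : n \in undup (F1 ++ F2) by rewrite mem_undup mem_cat nF orbT.
by rewrite /restr nF.
Qed.

Lemma measurable_seqRE : (measurable : set (set (seqRType R))) = <<s cylinders >>.
Proof.
apply/seteqP; split.
  apply: sub_sigma_algebra2 => _ [n _ [B mB <-]].
  exists [:: n], (fun=> B); split => //.
  apply/seteqP; split => x /=; first by move=> Bx k; rewrite inE => /eqP->.
  by apply; rewrite inE.
apply: smallest_sub; first exact: sigma_algebra_measurable.
by move=> _ [F [B [_ mB ->]]]; exact: measurable_cylinder.
Qed.

Lemma measure_unique_cylinder (mu nu : {measure set (seqRType R) -> \bar R}) :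
  (mu setT < +oo)%E ->
  (forall F B, uniq F -> (forall n, measurable (B n)) ->
     mu (cylinder F B) = nu (cylinder F B)) ->
  forall A, measurable A -> mu A = nu A.
Proof.
move=> mu_fin mu_nu A mA.
apply: (measure_unique cylinders (fun=> setT)) => //.
- exact: measurable_seqRE.
- exact: cylinders_setI_closed.
- by move=> _; exists [::], (fun=> setT); rewrite cylinder_nil.
- by rewrite bigcup_const.
- by move=> _ [F [B [uF mB ->]]]; exact: mu_nu.
Qed.

Definition splice s (p : seqRType R * seqRType R) : seqRType R :=
  fun k => if k \in s then p.2 (index k s) else p.1 k.

Lemma measurable_splice s :
  measurable_fun [set: seqRType R * seqRType R] (splice s).
Proof.
apply: measurable_fun_seqR => k; rewrite /splice; case: (k \in s).
  exact: (measurableT_comp (measurable_coord (index k s)) measurable_snd).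
exact: (measurableT_comp (measurable_coord k) measurable_fst).
Qed.

Lemma splice_preimage_cylinder s F B :
  splice s @^-1` cylinder F B =
  cylinder [seq k <- F | k \notin s] B `*`
  cylinder [seq index k s | k <- F & k \in s] (fun j => B (nth 0%N s j)).
Proof.
apply/seteqP; split => -[x z] /=.
  move=> H; split => n.
    by rewrite mem_filter => /andP[ns /H]; rewrite /splice (negbTE ns).
  move=> /mapP[k]; rewrite mem_filter => /andP[ks /H] + ->.
  by rewrite nth_index // /splice ks.
move=> [Hx Hz] n nF; rewrite /splice; case: ifPn => ns.
  have := Hz (index n s); rewrite nth_index //; apply.
  by apply/mapP; exists n; rewrite // mem_filter ns.
by apply: Hx; rewrite mem_filter ns.
Qed.

Definition set_coord x j (t : R) : seqRType R :=
  fun k => if k == j then t else x k.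

Lemma measurable_set_coord x j : measurable_fun [set: R] (set_coord x j).
Proof.
apply: measurable_fun_seqR => k; rewrite /set_coord.
by case: (k == j); [exact: measurable_id | exact: measurable_cst].
Qed.

Lemma splice1 j x z : splice [:: j] (x, z) = set_coord x j (z 0%N).
Proof.
by apply/funext => k; rewrite /splice /set_coord inE; case: eqP => // ->; rewrite /= eqxx.
Qed.

Lemma xsection_splice1 j A x :
  xsection (splice [:: j] @^-1` A) x = (fun z => z 0%N) @^-1` (set_coord x j @^-1` A).
Proof. by apply/seteqP; split => z; rewrite /xsection /= inE /preimage /= splice1. Qed.

Definition shift_at j (c : R) z : seqRType R :=
  fun k => if k == j then z k + c else z k.

Definition shift_prefix n (c : R) z : seqRType R :=
  fun k => if (k < n)%N then z k + c else z k.

Lemma measurable_shift_at j c : measurable_fun [set: seqRType R] (shift_at j c).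
Proof.
apply: measurable_fun_seqR => k; rewrite /shift_at; case: (k == j).
  by apply: measurable_funD => //; exact: measurable_coord.
exact: measurable_coord.
Qed.

Lemma shift_at_set_coord j c x t :
  shift_at j c (set_coord x j t) = set_coord x j (t + c).
Proof. by apply/funext => k; rewrite /shift_at /set_coord; case: eqP. Qed.

Lemma shift_prefix0 c z : shift_prefix 0 c z = z.
Proof. by apply/funext => k. Qed.

Lemma shift_prefixS n c z : shift_prefix n.+1 c z = shift_at n c (shift_prefix n c z).
Proof.
apply/funext => k; rewrite /shift_prefix /shift_at ltnS leq_eqVlt.
by case: eqP => [->|kn] /=; rewrite ?ltnn.
Qed.

Lemma measurable_Xstar s : measurable_fun [set: seqRType R] (Xstar s).
Proof.
rewrite /Xstar; move: (head 0%N s) => h.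
elim: s => [|a s IH]; first by under eq_fun do rewrite big_nil; exact: measurable_coord.
under eq_fun do rewrite big_cons.
by apply: measurable_maxr => //; exact: measurable_coord.
Qed.

Lemma Xstar_ge0 s x : (forall k, 0 <= x k) -> 0 <= Xstar s x.
Proof.
move=> x0; rewrite /Xstar; elim: s (head 0%N s) => [|a s IH] h.
  by rewrite big_nil.
by rewrite big_cons le_max x0.
Qed.

Definition Ymap_pair s (p : seqRType R * seqRType R) : seqRType R := Ymap s p.1 p.2.

Lemma measurable_Ymap_pair s : measurable_fun [set: seqRType R * seqRType R] (Ymap_pair s).
Proof.
apply: measurable_fun_seqR => k; rewrite /Ymap_pair /Ymap; case: (k \in s).
  apply: measurable_funD; last exact: (measurableT_comp (measurable_coord _) measurable_snd).
  apply: measurable_funM => //.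
  exact: (measurableT_comp (measurable_Xstar s) measurable_fst).
exact: (measurableT_comp (measurable_coord k) measurable_fst).
Qed.

Lemma Ymap_splice s x z :
  Ymap s x z = splice s (x, shift_prefix (size s) (2 * Xstar s x) z).
Proof.
apply/funext => k; rewrite /Ymap /splice /shift_prefix /=.
by case: ifP => // ks; rewrite index_mem ks addrC.
Qed.

End sequence_space.

Section iid_sequence.
Context {R : realType} {d : measure_display} {Omega : measurableType d}
  (P : probability Omega R) (g : R -> R) (Z : nat -> Omega -> R).
Hypothesis Ziid : iid_with_density P g Z.

Let mZ : forall n, measurable_fun [set: Omega] (Z n).
Proof. by case: Ziid. Qed.

Let mvZ : measurable_fun [set: Omega] (vec Z : Omega -> seqRType R).
Proof. exact: measurable_fun_seqR. Qed.

Local Notation lawZ := (distribution P (mfun_Sub (mem_set mvZ))).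
Local Notation law0 := (distribution P (mfun_Sub (mem_set (mZ 0)))).

Lemma law0E B : measurable B ->
  law0 B = (\int[lebesgue_measure]_(x in B) (g x)%:E)%E.
Proof. by move=> mB; case: Ziid => _ Zlaw _; exact: Zlaw. Qed.

Lemma lawZ_coord0 E : lawZ ((fun z : seqRType R => z 0%N) @^-1` E) = law0 E.
Proof. by []. Qed.

Lemma lawZ_cylinder F B : uniq F -> (forall n, measurable (B n)) ->
  lawZ (cylinder F B) = (\prod_(n <- F) law0 (B n))%E.
Proof.
move=> uF mB; rewrite -[LHS]/(P (vec Z @^-1` cylinder F B)).
have -> : vec Z @^-1` cylinder F B = \bigcap_(n in [set n | n \in F]) (Z n @^-1` B n).
  by apply/seteqP; split => w /= H n; apply: H.
case: Ziid => _ Zlaw -> //; apply: eq_bigr => n _.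
by rewrite Zlaw // law0E.
Qed.

Lemma lawZ_unique (nu : {measure set (seqRType R) -> \bar R}) :
  (forall F B, uniq F -> (forall n, measurable (B n)) ->
     nu (cylinder F B) = (\prod_(n <- F) law0 (B n))%E) ->
  forall A, measurable A -> lawZ A = nu A.
Proof.
move=> nu_cyl; apply: measure_unique_cylinder.
  by have := probability_setT lawZ; rewrite /= => ->; rewrite ltry.
by move=> F B uF mB; rewrite nu_cyl //; exact: lawZ_cylinder.
Qed.

Lemma lawZ_splice s A : measurable A ->
  lawZ A = (lawZ \x lawZ)%E (splice s @^-1` A).
Proof.
move=> mA; apply: (@lawZ_unique (distribution (lawZ \x lawZ)%E
  (mfun_Sub (mem_set (measurable_splice s)))) _ A mA) => F B uF mB.
rewrite /distribution /pushforward /= splice_preimage_cylinder.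
rewrite product_measure1E; last 2 first.
- exact: measurable_cylinder.
- by apply: measurable_cylinder => n; exact: mB.
have uF2 : uniq [seq index k s | k <- F & k \in s].
  rewrite map_inj_in_uniq ?filter_uniq // => k1 k2.
  rewrite !mem_filter => /andP[k1s _] /andP[k2s _] e.
  by rewrite -(nth_index 0%N k1s) e nth_index.
have -> : (\prod_(n <- F) law0 (B n) =
    (\prod_(k <- [seq k <- F | k \notin s]) law0 (B k)) *
    \prod_(k <- [seq k <- F | k \in s]) law0 (B k))%E.
  by rewrite !big_filter muleC [LHS](bigID (fun k => k \in s)).
congr (_ * _)%E; first by apply: lawZ_cylinder; rewrite ?filter_uniq.
transitivity (\prod_(j <- [seq index k s | k <- F & k \in s]) law0 (B (nth 0%N s j)))%E.
  by apply: lawZ_cylinder => // j; exact: mB.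
rewrite big_map; apply: eq_big_seq => k; rewrite mem_filter => /andP[ks _].
by rewrite nth_index.
Qed.

Section translation_bound.
Variables (K C : R).
Hypothesis C0 : 0 <= C.
Hypothesis law0_shift_le : forall c D, 0 <= c <= K -> measurable D ->
  (law0 (shift c @^-1` D) <= C%:E * law0 D)%E.

(* Splicing z_0 into position j makes coordinate j an independent copy of
   Z_0, so Fubini reduces the bound to the one-dimensional one. *)
Lemma lawZ_shift_at_le j c A : 0 <= c <= K -> measurable A ->
  (lawZ (shift_at j c @^-1` A) <= C%:E * lawZ A)%E.
Proof.
move=> cK mA.
have mcA := measurableT_preimage (measurable_shift_at j c) mA.
have mjA := measurableT_preimage (measurable_splice [:: j]) mA.
have mjcA := measurableT_preimage (measurable_splice [:: j]) mcA.
rewrite (lawZ_splice [:: j] mcA) (lawZ_splice [:: j] mA) /product_measure1 /=.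
rewrite -ge0_integralZl_EFin //; last exact: measurable_fun_xsection.
apply: ge0_le_integral => //.
- exact: measurable_fun_xsection.
- by apply: emeasurable_funM => //; exact: measurable_fun_xsection.
move=> x _; rewrite !xsection_splice1.
have -> : set_coord x j @^-1` (shift_at j c @^-1` A) =
          shift c @^-1` (set_coord x j @^-1` A).
  by apply/seteqP; split => t /=; rewrite shift_at_set_coord.
rewrite !lawZ_coord0; apply: law0_shift_le => //.
exact: measurableT_preimage (measurable_set_coord x j) mA.
Qed.

Lemma lawZ_shift_prefix_le n c A : 0 <= c <= K -> measurable A ->
  (lawZ (shift_prefix n c @^-1` A) <= (C ^+ n)%:E * lawZ A)%E.
Proof.
move=> cK; elim: n A => [|n IH] A mA.
  rewrite expr0 mul1e; suff -> : shift_prefix 0 c @^-1` A = A by [].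
  by apply/seteqP; split => z /=; rewrite shift_prefix0.
have -> : shift_prefix n.+1 c @^-1` A = shift_prefix n c @^-1` (shift_at n c @^-1` A).
  by apply/seteqP; split => z /=; rewrite shift_prefixS.
apply: (le_trans (IH _ (measurableT_preimage (measurable_shift_at n c) mA))).
rewrite exprSr EFinM -muleA lee_wpmul2l ?lee_fin ?exprn_ge0 //.
exact: lawZ_shift_at_le.
Qed.

End translation_bound.

Section perturbation.
Variables (X : nat -> Omega -> R) (I : (nat -> R) -> seq nat).
Hypotheses (mX : forall n, measurable_fun [set: Omega] (X n))
  (gG : good_density g) (XZ_indep : indep_seq P (vec X) (vec Z))
  (XZ_abs : law_abs_cont P (vec X) (vec Z)) (Isel : index_selector I).

Let mvX : measurable_fun [set: Omega] (vec X : Omega -> seqRType R).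
Proof. exact: measurable_fun_seqR. Qed.

Local Notation lawX := (distribution P (mfun_Sub (mem_set mvX))).

Let XZ (w : Omega) : seqRType R * seqRType R := (vec X w, vec Z w).

Let mXZ : measurable_fun [set: Omega] XZ.
Proof. exact: measurable_fun_pair. Qed.

Lemma lawXZ S : measurable S -> P (XZ @^-1` S) = (lawX \x lawZ)%E S.
Proof.
move=> mS; symmetry.
apply: (@product_measure_unique _ _ _ _ _ lawX lawZ
  (distribution P (mfun_Sub (mem_set mXZ))) _ S mS) => A B mA mB.
exact (XZ_indep mA mB).
Qed.

Lemma lawX_dominated : lawX `<< lawZ.
Proof. by apply/null_content_dominatesP => A mA; exact: XZ_abs. Qed.

Lemma integral_lawZ_xsection_splice s A : measurable A -> lawZ A = 0%E ->
  (\int[lawX]_x lawZ (xsection (splice s @^-1` A) x) = 0)%E.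
Proof.
move=> mA A0.
have msA := measurableT_preimage (measurable_splice s) mA.
apply: null_dominates_integral0 lawX_dominated _ _ _.
- exact: measurable_fun_xsection.
- by move=> x; exact: measure_ge0.
by rewrite -A0 (lawZ_splice s mA).
Qed.

Definition bounded_event s (K : nat) : set (seqRType R) :=
  [set x | [/\ I x = s, forall k, 0 <= x k & Xstar s x <= K%:R]].

Lemma measurable_bounded_event s K : measurable (bounded_event s K).
Proof.
have -> : bounded_event s K = [set x | I x = s] `&`
    \bigcap_k ((fun x : seqRType R => x k) @^-1` `[0, +oo[%classic) `&`
    Xstar s @^-1` `]-oo, K%:R]%classic.
  apply/seteqP; split => x /=.
    move=> [Ixs x0 xK]; split; first split => // k _.
      by rewrite /= in_itv /= x0.
    by rewrite /= in_itv /= xK.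
  move=> [[Ixs x0]]; rewrite /= in_itv /= => xK; split => // k.
  by have := x0 k Logic.I; rewrite /= in_itv /= andbT.
apply: measurableI; first apply: measurableI.
- by case: Isel => _ /(_ s).
- by apply: bigcapT_measurable => k; exact: measurableT_preimage (measurable_coord k) _.
- exact: measurableT_preimage (measurable_Xstar s) _.
Qed.

Definition Ymap_event s K A : set (seqRType R * seqRType R) :=
  bounded_event s K `*` setT `&` Ymap_pair s @^-1` A.

Lemma measurable_Ymap_event s K A : measurable A -> measurable (Ymap_event s K A).
Proof.
move=> mA; apply: measurableI; first exact: measurableX (measurable_bounded_event s K) _.
exact: measurableT_preimage (measurable_Ymap_pair s) mA.
Qed.

Lemma P_Ymap_event0 s K A : measurable A -> lawZ A = 0%E ->
  P (XZ @^-1` Ymap_event s K A) = 0%E.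
Proof.
move=> mA A0.
(* The [+ 1] keeps the bound positive when K = 0, as [good_density] requires. *)
have K0 : 0 < 2 * K%:R + 1 :> R by rewrite ltr_pwDr // mulr_ge0.
have [C C0 HC] := good_density_integral_shift_le gG K0.
have law0_shift (c : R) (D : set R) : 0 <= c <= 2 * K%:R + 1 -> measurable D ->
    (law0 (shift c @^-1` D) <= C%:E * law0 D)%E.
  move=> cK mD; rewrite !law0E //; first exact: HC.
  exact: measurableT_preimage (measurable_shift c) mD.
have msA := measurableT_preimage (measurable_splice s) mA.
apply/eqP; rewrite eq_le measure_ge0 andbT lawXZ; last exact: measurable_Ymap_event.
rewrite -(mule0 (C ^+ size s)%:E) -(integral_lawZ_xsection_splice s mA A0).
rewrite -ge0_integralZl_EFin ?exprn_ge0 //; last exact: measurable_fun_xsection.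
rewrite /product_measure1 /=.
apply: ge0_le_integral => //.
- by apply: measurable_fun_xsection; exact: measurable_Ymap_event.
- by apply: emeasurable_funM => //; exact: measurable_fun_xsection.
move=> x _ /=.
have [[Ixs x0 xK]|xNE] := pselect (bounded_event s K x); last first.
  have -> : xsection (Ymap_event s K A) x = set0.
    by rewrite -subset0 => z; rewrite /xsection /= inE => -[[/xNE []]].
  by rewrite measure0 mule_ge0 ?lee_fin ?exprn_ge0.
have -> : xsection (Ymap_event s K A) x =
    shift_prefix (size s) (2 * Xstar s x) @^-1` xsection (splice s @^-1` A) x.
  apply/seteqP; split => z; rewrite /xsection /= !inE /Ymap_event /setI /setX /preimage /= /Ymap_pair Ymap_splice.
    by case.
  by move=> Az; do !split.
apply: (lawZ_shift_prefix_le C0 law0_shift); last exact: measurable_xsection.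
rewrite mulr_ge0 ?Xstar_ge0 //= -[2 * Xstar s x]addr0.
by apply: lerD; rewrite ?ler_pM2l ?ler01.
Qed.

Lemma P_X_lt0 k : P (X k @^-1` `]-oo, 0[%classic) = 0%E.
Proof.
apply: (XZ_abs (measurableT_preimage (measurable_coord k) (measurable_itv _))).
rewrite -[LHS]/(P (Z k @^-1` `]-oo, 0[%classic)).
case: Ziid => _ -> // _; rewrite -(integral0 lebesgue_measure `]-oo, (0:R)[%classic).
apply: eq_integral => x; rewrite inE /= in_itv /= => x0.
by case: gG => _ _ _ [-> // _ _].
Qed.

Local Notation Y := (fun w => Ymap (I (vec X w)) (vec X w) (vec Z w)).

Lemma measurable_Y_preimage (A : set (seqRType R)) : measurable A ->
  measurable (Y @^-1` A).
Proof.
move=> mA.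
have -> : Y @^-1` A =
    \bigcup_(s : seq nat) (vec X @^-1` [set x | I x = s] `&` XZ @^-1` (Ymap_pair s @^-1` A)).
  apply/seteqP; split => w /=; first by move=> Yw; exists (I (vec X w)).
  by move=> [s _ [/= <-]].
apply: countable_bigcupT_measurable => // s; apply: measurableI.
  by apply: measurableT_preimage mvX _; case: Isel => _ /(_ s).
exact: measurableT_preimage mXZ (measurableT_preimage (measurable_Ymap_pair s) mA).
Qed.

Lemma Ymap_law_abs_cont : law_abs_cont P Y (vec Z).
Proof.
move=> A mA A0.
apply/negligibleP; first exact: measurable_Y_preimage.
have X_neg_null : P.-negligible (\bigcup_k X k @^-1` `]-oo, 0[%classic).
  apply: negligible_bigcup => k; apply/negligibleP; last exact: P_X_lt0.
  exact: measurableT_preimage (mX k) (measurable_itv _).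
have events_null : P.-negligible
    (\bigcup_(sK : seq nat * nat) (XZ @^-1` Ymap_event sK.1 sK.2 A)).
  apply: negligible_bigcup_countType => -[s K]; apply/negligibleP.
    exact: measurableT_preimage mXZ (measurable_Ymap_event s K mA).
  exact: P_Ymap_event0.
apply: (negligibleS _ (negligibleU X_neg_null events_null)) => w Yw.
have [[k Xk]|X_ge0] := pselect (exists k, X k w < 0).
  by left; exists k => //=; rewrite in_itv /= Xk.
right; exists (I (vec X w), (Num.truncn (Xstar (I (vec X w)) (vec X w))).+1) => //.
split => //; split => //; split => //.
- by move=> k; rewrite leNgt; apply/negP => Xk; apply: X_ge0; exists k.
- exact/ltW/truncnS_gt.
Qed.

End perturbation.

End iid_sequence.

Theorem mainTheorem10 (R : realType) (d : measure_display)
    (Omega : measurableType d) (P : probability Omega R)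
    (g : R -> R) (Z X : nat -> Omega -> R) (I : (nat -> R) -> seq nat) :
  good_density g ->
  iid_with_density P g Z ->
  (forall n, measurable_fun [set: Omega] (X n)) ->
  indep_seq P (vec X) (vec Z) ->
  law_abs_cont P (vec X) (vec Z) ->
  index_selector I ->
  law_abs_cont P (fun w => Ymap (I (vec X w)) (vec X w) (vec Z w)) (vec Z).
Proof.
move=> gG Ziid mX XZ_indep XZ_abs Isel.
exact: (Ymap_law_abs_cont Ziid mX gG XZ_indep XZ_abs Isel).
Qed.
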